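(* For each $n\in\{3,4,5,6,7\}$, the N00N state $Q=\frac{1}{\sqrt2}\cdot\frac{1}{\sqrt{n!}}\big((a^\dagger_1)^n+(a^\dagger_2)^n\big)$ (i.e. $(|n,0\rangle+|0,n\rangle)/\sqrt2$) cannot be generated by vacuum heralding from the $(n-1)$-mode input $|2,1,\dots,1\rangle$: there is no complex $(n-1)\times(n-1)$ matrix $A$ and no $\gamma\in\mathbb{C}$ such that $\gamma G=Q$, where $G$ is obtained with input occupation numbers $(n_1,\dots,n_{n-1})=(2,1,\dots,1)$ and heralding pattern $(0,\dots,0)$ on the last $n-3$ modes.
   Context: Heralded linear-optical state generation model. States with a fixed photon number are homogeneous polynomials in commuting variables $a^\dagger_1,\dots,a^\dagger_N$ applied to the vacuum. Given $N$ modes, an arbitrary complex $N\times N$ matrix $A$ (not required to be unitary), and a Fock input $\prod_{i=1}^N\frac{1}{\sqrt{n_i!}}(a^\dagger_{i,\mathrm{in}})^{n_i}|0\rangle$, the output is $F|0\rangle$ with $F=\prod_{i=1}^N\frac{1}{\sqrt{n_i!}}\big(\sum_{j=1}^N A_{i,j}a^\dagger_j\big)^{n_i}$. Heralding the last $M$ modes on the pattern $(m_1,\dots,m_M)$, $m=\sum_jm_j$, gives $G=\frac{1}{\prod_jm_j!}\,\frac{\partial^{m}F}{\partial(a^\dagger_{N-M+1})^{m_1}\cdots\partial(a^\dagger_N)^{m_M}}\Big|_{a^\dagger_{N-M+1}=\cdots=a^\dagger_N=0}$; for the all-zero (vacuum) pattern this is just $F$ with $a^\dagger_{N-M+1},\dots,a^\dagger_N$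 set to $0$. $G$ and $Q$ are compared as polynomials in $a^\dagger_1,\dots,a^\dagger_{N-M}$. *)

From HB Require Import structures.
From mathcomp Require Import all_boot all_order all_algebra.
From mathcomp Require Import complex.
From mathcomp Require Import Rstruct.
From mathcomp Require Import mpoly.
From Stdlib Require Rdefinitions.

Set Implicit Arguments.
Unset Strict Implicit.
Unset Printing Implicit Defensive.

Import Order.TTheory GRing.Theory Num.Theory.
Local Open Scope ring_scope.

Notation C := (complex Rdefinitions.R).

(* Output creation operator of input mode i: sum_j A_{i,j} a^dagger_j,
   with a^dagger_j represented by the variable 'X_j. *)
Definition out_op (N : nat) (A : 'M[C]_N) (i : 'I_N) : {mpoly C[N]} :=
  \sum_(j < N) A i j *: 'X_j.

Definition Fpoly (N : nat) (A : 'M[C]_N) (occ : 'I_N -> nat) : {mpoly C[N]} :=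
  \prod_(i < N) (((sqrtC ((occ i)`!)%:R)^-1) *: (out_op A i) ^+ occ i).

(* Vacuum heralding of all modes with index >= K (the last N - K modes):
   substitute 0 for a^dagger_j, j >= K, and keep a^dagger_j, j < K. *)
Definition vac_herald (N K : nat) (F : {mpoly C[N]}) : {mpoly C[K]} :=
  F \mPo [tuple (oapp (fun j : 'I_K => 'X_j) 0 (insub (val i) : option 'I_K)) | i < N].

Definition occ_2111 (N : nat) (i : 'I_N) : nat := if val i == 0%N then 2%N else 1%N.

Definition noon (n : nat) : {mpoly C[2]} :=
  ((sqrtC 2)^-1 * (sqrtC (n`!)%:R)^-1) *: ('X_0 ^+ n + 'X_1 ^+ n).

(* After vacuum heralding, the doubly occupied first input mode contributes the
   factor (A00 x1 + A01 x2)^2, so gamma G is divisible by the square of a linear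
   form, whereas x1^n + x2^n is squarefree.  Squarefreeness is checked on lines:
   substituting polynomials p, q in one variable t such that A00 p + A01 q is a
   multiple of t makes t^2 divide p^n + q^n, which forces A00 = A01 = 0, and
   then G = 0. *)
From HB Require Import structures.
From mathcomp Require Import all_boot all_order all_algebra.
From mathcomp Require Import complex Rstruct.
From mathcomp Require Import mpoly.
From mathcomp Require Import ring.

Set Implicit Arguments.
Unset Strict Implicit.
Unset Printing Implicit Defensive.

Import GRing.Theory Num.Theory.
Local Open Scope ring_scope.

Lemma coef1_XaddC_exp (K : comNzRingType) (x : K) (n : nat) :
  (('X + x%:P) ^+ n)`_1 = x ^+ n.-1 *+ n.
Proof.
have := coef_deriv (('X + x%:P) ^+ n) 0; rewrite mulr1n => <-.
by rewrite deriv_exp derivD derivC derivX addr0 mul1r coefMn -horner_coef0 !hornerE.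
Qed.

Section SubstPoly.
Variables (K : comNzRingType) (n : nat) (v : n.-tuple {poly K}).

Definition msubst_poly (r : {mpoly K[n]}) : {poly K} := mmap (@polyC K) (tnth v) r.

HB.instance Definition _ :=
  GRing.RMorphism.copy msubst_poly (mmap (@polyC K) (tnth v)).

Lemma msubst_polyX i : msubst_poly 'X_i = tnth v i.
Proof. by rewrite /msubst_poly mmapX mmap1U. Qed.

Lemma msubst_polyZ c r : msubst_poly (c *: r) = c%:P * msubst_poly r.
Proof. exact: mmapZ. Qed.

End SubstPoly.

Section SquarefreeSumXn.
Variables (K : numDomainType) (a b : K) (R : {mpoly K[2]}) (n : nat).
Hypothesis n_gt0 : (0 < n)%N.
Hypothesis sqr_linear_mul : (a *: 'X_0 + b *: 'X_1) ^+ 2 * R = 'X_0 ^+ n + 'X_1 ^+ n.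

Lemma coef_sumXn_restrict_eq0 (p q : {poly K}) (d : K) :
  a%:P * p + b%:P * q = d%:P * 'X -> forall i, (i < 2)%N -> (p ^+ n + q ^+ n)`_i = 0.
Proof.
move=> line i lt_i2.
have := congr1 (msubst_poly [tuple p; q]) sqr_linear_mul.
rewrite rmorphM !rmorphXn !rmorphD !rmorphXn /= !msubst_polyZ !msubst_polyX /= line => <-.
by rewrite exprMn -mulrA mulrC -mulrA coefXnM lt_i2.
Qed.

Lemma sqr_linear_coefs_eq0 : a = 0 /\ b = 0.
Proof.
have coef1_eq0 (x y : K) : (('X + x%:P) ^+ n + y%:P ^+ n)`_1 = 0 -> x = 0.
  rewrite coefD coef1_XaddC_exp -rmorphXn coefC addr0 => /eqP.
  by rewrite mulrn_eq0 expf_eq0 (negbTE (lt0n_neq0 n_gt0)) => /andP[_ /eqP].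
(* On the lines (-b, t + a) and (t + b, -a) the linear form is b t, resp. a t,
   and the t-coefficient of p^n + q^n is n a^(n-1), resp. n b^(n-1). *)
split.
- apply: (coef1_eq0 a (- b)); rewrite addrC.
  apply: (coef_sumXn_restrict_eq0 (d := b)) => //.
  by rewrite rmorphN; ring.
- apply: (coef1_eq0 b (- a)); apply: (coef_sumXn_restrict_eq0 (d := a)) => //.
  by rewrite rmorphN; ring.
Qed.

End SquarefreeSumXn.

Lemma sumXn_neq_sqr_linear_mul (K : numDomainType) (a b : K) (R : {mpoly K[2]}) (n : nat) :
  (0 < n)%N -> (a *: 'X_0 + b *: 'X_1) ^+ 2 * R != 'X_0 ^+ n + 'X_1 ^+ n.
Proof.
move=> n_gt0; apply/eqP => sqr_linear_mul.
have [a0 b0] := sqr_linear_coefs_eq0 n_gt0 sqr_linear_mul.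
have line : a%:P * 1 + b%:P * 0 = 0%:P * 'X :> {poly K}.
  by rewrite a0 b0 !mul0r addr0.
have /eqP := coef_sumXn_restrict_eq0 sqr_linear_mul line (i := 0) isT.
by rewrite expr1n expr0n eqn0Ngt n_gt0 addr0 coef1 oner_eq0.
Qed.

HB.instance Definition _ (N K : nat) :=
  GRing.LRMorphism.copy (@vac_herald N K)
    (comp_mpoly [tuple (oapp (fun j : 'I_K => 'X_j) 0 (insub (val i) : option 'I_K)) | i < N]).

Lemma vac_herald_X (N K : nat) (j : 'I_N) :
  vac_herald K 'X_j = oapp (fun k : 'I_K => 'X_k) 0 (insub (val j) : option 'I_K).
Proof. by rewrite /vac_herald comp_mpolyXU -tnth_nth tnth_mktuple. Qed.

Lemma vac_herald_X_val (N K : nat) (j : 'I_N) (k : 'I_K) :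
  val j = val k -> vac_herald K 'X_j = 'X_k.
Proof. by move=> jk; rewrite vac_herald_X jk valK. Qed.

Lemma vac_herald_out_op (N : nat) (A : 'M[C]_N.+2) (i : 'I_N.+2) :
  vac_herald 2 (out_op A i) = A i 0 *: 'X_0 + A i 1 *: 'X_1.
Proof.
rewrite /out_op linear_sum 2!big_ord_recl big1 => [|j _]; last first.
  by rewrite linearZ /= vac_herald_X insubF ?scaler0.
have -> : lift ord0 ord0 = 1 :> 'I_N.+2 by apply: val_inj; rewrite /= modn_small.
rewrite !linearZ /= (@vac_herald_X_val _ _ _ 0) // (@vac_herald_X_val _ _ _ 1) //.
(* [addr0] must not be tried on the outer sum: unifying a heralded polynomial
   with 0 makes Rocq evaluate it. *)
by congr (_ + _); apply: addr0.
Qed.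

Lemma vac_herald_Fpoly_2111 (N : nat) (A : 'M[C]_N.+2) : exists R,
  vac_herald 2 (Fpoly A (@occ_2111 N.+2)) = (A 0 0 *: 'X_0 + A 0 1 *: 'X_1) ^+ 2 * R.
Proof.
rewrite /Fpoly big_ord_recl rmorphM /= linearZ rmorphXn /= vac_herald_out_op.
by eexists; rewrite -scalerAl scalerAr.
Qed.

Theorem mainTheorem4 (n : nat) :
  (3 <= n <= 7)%N ->
  ~ exists (A : 'M[C]_(n.-1)) (gamma : C),
      gamma *: vac_herald 2 (Fpoly A (@occ_2111 n.-1)) = noon n.
Proof.
case: n => [|[|[|n]]] // _ [A [gamma]] /=.
have [R ->] := vac_herald_Fpoly_2111 A.
rewrite /noon; set c := (sqrtC 2)^-1 * _ => herald_eq_noon.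
have c_neq0 : c != 0.
  by rewrite mulf_neq0 // invr_eq0 sqrtC_eq0 pnatr_eq0 // -lt0n fact_gt0.
move/eqP: (sumXn_neq_sqr_linear_mul (A 0 0) (A 0 1) ((c^-1 * gamma) *: R) (ltn0Sn n.+2)).
by apply; rewrite -scalerAr -scalerA herald_eq_noon scalerA mulVf ?scale1r.
Qed.
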